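(* Let $F=F(N,\mathcal D)$ be a GSC. Then $F$ is connected if and only if $Q_3$ is connected.
   Context: GSC: $N\ge2$, $\mathcal D\subset\{0,\dots,N-1\}^2$ with $1<|\mathcal D|<N^2$, $\varphi_i(x)=\frac1N(x+i)$, $F$ the attractor $F=\bigcup_{i\in\mathcal D}\varphi_i(F)$. $Q_0=[0,1]^2$ and $Q_n=\bigcup_{i\in\mathcal D}\varphi_i(Q_{n-1})$ for $n\ge1$. *)

From HB Require Import structures.
From mathcomp Require Import all_boot all_order all_algebra.
From mathcomp Require Import all_classical all_reals all_analysis.
Set Implicit Arguments. Unset Strict Implicit. Unset Printing Implicit Defensive.
Import Order.TTheory GRing.Theory Num.Theory.
Import numFieldNormedType.Exports.
Local Open Scope classical_set_scope.
Local Open Scope ring_scope.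

Definition gsc_map {R : realType} (N : nat) (i : 'I_N * 'I_N) (x : R * R) : R * R :=
  ((x.1 + (i.1 : nat)%:R) / N%:R, (x.2 + (i.2 : nat)%:R) / N%:R).

Definition unit_square {R : realType} : set (R * R) :=
  [set x | 0 <= x.1 <= 1 /\ 0 <= x.2 <= 1].

Fixpoint gsc_Q {R : realType} (N : nat) (D : {set 'I_N * 'I_N}) (n : nat) : set (R * R) :=
  match n with
  | 0 => unit_square
  | n'.+1 => \bigcup_(i in [set i | i \in D]) (gsc_map i @` gsc_Q D n')
  end.

(* F is the attractor of the IFS {phi_i : i in D}: the (unique, by Hutchinson)
   nonempty compact set with F = U_{i in D} phi_i(F). *)
Definition gsc_attractor {R : realType} (N : nat) (D : {set 'I_N * 'I_N}) (F : set (R * R)) :=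
  F !=set0 /\ compact F /\ F = \bigcup_(i in [set i | i \in D]) (gsc_map i @` F).

(* Q_n is the union of the squares [c, c + 1]^2 / N^n over the level-n cells c, a cell
   of level n + 1 being a digit d in D followed by a cell of level n. So Q_n is connected
   iff its cells are connected under king-move adjacency, and the cells of level n + 1 are
   connected iff those of level n are and D is connected for the relation "the level-n
   copies of d and d' touch". Whether the copies at offset g in {-1,0,1}^2 touch at level
   n + 1 reduces to level n along a step g |-> N g + e - e' (e, e' in D); steps keep the
   nonzero coordinates of g, so two steps reach a fixed offset and copies touching at
   level 2 touch at every level. Hence connectedness of Q_3 gives that of every Q_n,
   n >= 3. The attractor F lies in Q_0 and meets every square of Q_n, so F connected
   forces Q_3 connected. Conversely, if a clopen part B of F is cut out by an open U, an
   e-neighbourhood of B stays in U, and moving through adjacent squares of a connected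
   Q_n of mesh below e / 2 carries B to all of F. *)

From HB Require Import structures.
From mathcomp Require Import all_boot all_order all_algebra.
From mathcomp Require Import all_classical all_reals all_analysis.
From mathcomp Require Import zify ring lra.
Import numFieldNormedType.Exports.
Set Implicit Arguments. Unset Strict Implicit. Unset Printing Implicit Defensive.
Import Order.TTheory GRing.Theory Num.Theory.
Local Open Scope classical_set_scope.

Definition rel_connected {T : Type} (E : T -> T -> Prop) (S : set T) : Prop :=
  forall A : set T, A `<=` S -> A !=set0 ->
  (forall u v, A u -> S v -> E u v -> A v) -> S `<=` A.

Lemma sub_rel_connected {T : Type} (E E' : T -> T -> Prop) (S : set T) :
  (forall u v, E u v -> E' u v) -> rel_connected E S -> rel_connected E' S.
Proof. by move=> EE' cS A AS A0 Acl; apply: cS => // u v Au Sv /EE'; exact: Acl. Qed.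

Definition cell_adj (u v : nat * nat) : Prop :=
  (u.1 <= v.1 + 1 /\ v.1 <= u.1 + 1 /\ u.2 <= v.2 + 1 /\ v.2 <= u.2 + 1)%N.

Definition shift_cell N K (d : 'I_N * 'I_N) (u : nat * nat) : nat * nat :=
  (d.1 * K + u.1, d.2 * K + u.2)%N.

Lemma cell_adj_shift N K (d : 'I_N * 'I_N) u v :
  cell_adj u v -> cell_adj (shift_cell K d u) (shift_cell K d v).
Proof. rewrite /cell_adj /shift_cell /=; lia. Qed.

Lemma shift_cell_inj N K (d d' : 'I_N * 'I_N) u v :
  (u.1 < K)%N -> (u.2 < K)%N -> (v.1 < K)%N -> (v.2 < K)%N ->
  shift_cell K d u = shift_cell K d' v -> d = d'.
Proof.
rewrite /shift_cell => u1 u2 v1 v2 [E1 E2].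
have e1 : d.1 = d'.1 by apply: val_inj; case: (ltngtP d.1 d'.1) => // ?; nia.
have e2 : d.2 = d'.2 by apply: val_inj; case: (ltngtP d.2 d'.2) => // ?; nia.
by case: d d' e1 e2 {E1 E2} => [a b] [a' b'] /= -> ->.
Qed.

(* The level-n cells are the lower-left corners, scaled by N^n, of the squares of Q_n;
   the digit added at level n+1 is the most significant one. *)
Fixpoint gsc_cells N (D : {set 'I_N * 'I_N}) n : set (nat * nat) :=
  if n is n'.+1 then
    [set p | exists2 d, d \in D & exists2 u, gsc_cells D n' u & p = shift_cell (N ^ n') d u]
  else [set (0, 0)%N].

Section Cells.
Variables (N : nat) (D : {set 'I_N * 'I_N}).

Lemma gsc_cells_lt n u : gsc_cells D n u -> (u.1 < N ^ n)%N /\ (u.2 < N ^ n)%N.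
Proof.
elim: n u => [_ -> //|n IH _ [[d1 d2] _ [u /IH [u1 u2] ->]]].
rewrite /shift_cell /= expnS; have := ltn_ord d1; have := ltn_ord d2.
move: (N ^ n)%N u1 u2 => K *; split; nia.
Qed.

Lemma gsc_cells_finite n : finite_set (gsc_cells D n).
Proof.
apply: (@sub_finite_set _ _ (`I_(N ^ n) `*` `I_(N ^ n))); last exact: finite_setX.
by move=> c /gsc_cells_lt.
Qed.

Lemma gsc_cells_neq0 d n : d \in D -> gsc_cells D n !=set0.
Proof.
move=> dD; elim: n => [|n [u Au]]; first by exists (0, 0)%N.
by exists (shift_cell (N ^ n) d u); exists d => //; exists u.
Qed.

Definition digit_adj n (d d' : 'I_N * 'I_N) : Prop :=
  exists u v, gsc_cells D n u /\ gsc_cells D n v /\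
    cell_adj (shift_cell (N ^ n) d u) (shift_cell (N ^ n) d' v).

Lemma gsc_cells_connectedS n :
  rel_connected cell_adj (gsc_cells D n) ->
  rel_connected (digit_adj n) [set` D] ->
  rel_connected cell_adj (gsc_cells D n.+1).
Proof.
move=> cA cD T TA [t Tt] Tcl.
pose block (d : 'I_N * 'I_N) := [set u | gsc_cells D n u /\ T (shift_cell (N ^ n) d u)].
have block_full d u : d \in D -> block d u -> gsc_cells D n `<=` block d.
  move=> dD bu; apply: cA => [v []//||v w [Av Tv] Aw vw]; first by exists u.
  split=> //; apply: Tcl Tv _ (cell_adj_shift _ _ vw).
  by exists d => //; exists w.
have blocks : [set` D] `<=` [set d | d \in D /\ block d !=set0].
  apply: cD => [d []//||d d' [dD [u bu]] d'D [v [w [Av [Aw vw]]]]].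
  - have [d dD [u Au Et]] := TA _ Tt.
    by exists d; split=> //; exists u; split=> //; rewrite -Et.
  - split=> //; exists w; split=> //.
    have [_ Tv] := block_full _ _ dD bu _ Av.
    by apply: Tcl Tv _ vw; exists d' => //; exists w.
move=> _ [d dD [u Au ->]].
have [_ [w bw]] := blocks _ dD.
by have [] := block_full _ _ dD bw _ Au.
Qed.

Lemma digit_connected_of_cells n :
  rel_connected cell_adj (gsc_cells D n.+1) ->
  rel_connected (digit_adj n) [set` D].
Proof.
move=> cA A AD [d0 Ad0] Acl.
have [u0 Au0] := gsc_cells_neq0 n (AD _ Ad0).
pose T := [set p | exists2 d, A d & exists2 u, gsc_cells D n u & p = shift_cell (N ^ n) d u].
have cellsT : gsc_cells D n.+1 `<=` T.
  apply: cA => [_ [d /AD dD [u Au ->]]||].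
  - by exists d => //; exists u.
  - by exists (shift_cell (N ^ n) d0 u0); exists d0 => //; exists u0.
  - move=> _ _ [d Ad [u Au ->]] [d' d'D [v Av ->]] uv.
    exists d'; last by exists v.
    by apply: (Acl d) => //; exists u, v.
move=> d dD.
have [|d' Ad' [u Au E]] := cellsT (shift_cell (N ^ n) d u0).
  by exists d => //; exists u0.
have [b1 b2] := gsc_cells_lt Au0; have [b3 b4] := gsc_cells_lt Au.
by rewrite (shift_cell_inj b1 b2 b3 b4 E).
Qed.

Definition unit_box (g : int * int) : Prop := (-1 <= g.1 <= 1 /\ -1 <= g.2 <= 1)%R.

(* Two level-n copies whose digits differ by [g] touch. *)
Definition cell_offset n (g : int * int) : Prop :=
  exists u v, gsc_cells D n u /\ gsc_cells D n v /\
    unit_box ((N ^ n)%:Z * g.1 + u.1%:Z - v.1%:Z, (N ^ n)%:Z * g.2 + u.2%:Z - v.2%:Z)%R.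

Definition digit_step (g g' : int * int) : Prop :=
  exists e e' : 'I_N * 'I_N, e \in D /\ e' \in D /\
    g'.1 = (N%:Z * g.1 + (e.1 : nat)%:Z - (e'.1 : nat)%:Z)%R /\
    g'.2 = (N%:Z * g.2 + (e.2 : nat)%:Z - (e'.2 : nat)%:Z)%R.

Lemma digit_adjE n d d' :
  digit_adj n d d' <->
  cell_offset n ((d.1 : nat)%:Z - (d'.1 : nat)%:Z, (d.2 : nat)%:Z - (d'.2 : nat)%:Z)%R.
Proof.
case: d d' => [d1 d2] [d1' d2'].
rewrite /digit_adj /cell_offset /cell_adj /unit_box /shift_cell /=.
move: (N ^ n)%N => K; split=> -[u [v [Au [Av H]]]]; exists u, v; do 2 split=> //; nia.
Qed.

Lemma cell_offset_box n g : (0 < N)%N -> cell_offset n g -> unit_box g.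
Proof.
move=> N0 [u [v [Au [Av]]]]; have [u1 u2] := gsc_cells_lt Au; have [v1 v2] := gsc_cells_lt Av.
have : (0 < N ^ n)%N by rewrite expn_gt0 N0.
case: g => g1 g2; rewrite /unit_box /=; move: (N ^ n)%N u1 u2 v1 v2 => K *.
split; apply/andP; split; nia.
Qed.

Lemma cell_offset0 g : unit_box g -> cell_offset 0 g.
Proof.
by move=> [g1 g2]; exists (0, 0)%N, (0, 0)%N; do 2 split=> //; rewrite /unit_box /=; lia.
Qed.

Lemma cell_offsetS n g :
  cell_offset n.+1 g <-> exists2 g', digit_step g g' & cell_offset n g'.
Proof.
have shiftE (K a b u v : nat) (x : int) :
    ((N * K)%N%:Z * x + (a * K + u)%N%:Z - (b * K + v)%N%:Z =
     K%:Z * (N%:Z * x + a%:Z - b%:Z) + u%:Z - v%:Z)%R.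
  by rewrite !PoszD !PoszM; ring.
split=> [[_ [_ [[e eD [u Au ->]] [[e' e'D [v Av ->]]]]]]|[g' [e [e' [eD [e'D [E1 E2]]]]]]].
  rewrite /shift_cell /= expnS !shiftE => B.
  exists (N%:Z * g.1 + (e.1 : nat)%:Z - (e'.1 : nat)%:Z,
          N%:Z * g.2 + (e.2 : nat)%:Z - (e'.2 : nat)%:Z)%R.
    by exists e, e'.
  by exists u, v.
move=> [u [v [Au [Av B]]]].
exists (shift_cell (N ^ n) e u), (shift_cell (N ^ n) e' v); split.
  by exists e => //; exists u.
split; first by exists e' => //; exists v.
by rewrite /shift_cell /= expnS !shiftE -E1 -E2.
Qed.

Lemma cell_offset_fixed n g : digit_step g g -> unit_box g -> cell_offset n g.
Proof.
move=> gg bg; elim: n => [|n IH]; first exact: cell_offset0.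
by apply/cell_offsetS; exists g.
Qed.

Lemma digit_step_keep g g' : unit_box g -> unit_box g' -> digit_step g g' ->
  (g.1 <> 0%R -> g'.1 = g.1) /\ (g.2 <> 0%R -> g'.2 = g.2).
Proof.
have keep (a b : nat) (x y : int) : (a < N)%N -> (b < N)%N -> (-1 <= x <= 1)%R ->
    (-1 <= y <= 1)%R -> y = (N%:Z * x + a%:Z - b%:Z)%R -> x <> 0%R -> y = x.
  move=> a_lt b_lt bx b_y y_eq x_neq0.
  have x_unit : (x = -1 \/ x = 1)%R by lia.
  by move: y_eq; case: x_unit => ->; lia.
case: g g' => [x1 x2] [y1 y2] [bx1 bx2] [by1 by2] [[a1 a2] [[b1 b2] [_ [_ [E1 E2]]]]].
by split; apply: keep E1 || apply: keep E2.
Qed.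

(* Nonzero coordinates are kept by a step, so a step from a nonzero offset either
   fixes it or fills its zero coordinate, after which it is fixed. *)
Lemma digit_step_fixpoint d g1 g2 : unit_box d -> unit_box g1 -> unit_box g2 ->
  digit_step d g1 -> digit_step g1 g2 ->
  exists g, [/\ digit_step d g, digit_step g g & unit_box g].
Proof.
move=> bd b1 b2 s1 s2.
have [d0|d_neq0] := eqVneq d (0, 0)%R.
  have [e [_ [eD _]]] := s1.
  have step00 : digit_step (0, 0)%R (0, 0)%R by exists e, e; rewrite /= !mulr0 !add0r !subrr.
  by exists (0, 0)%R; rewrite d0; split=> //; rewrite /unit_box /=; lia.
have [g1d|g1_neq_d] := eqVneq g1 d; first by rewrite g1d in s1; exists d.
exists g1; split=> //; suff g12 : g1 = g2 by rewrite {2}g12.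
have [k1 k2] := digit_step_keep bd b1 s1; have [k3 k4] := digit_step_keep b1 b2 s2.
move: d g1 g2 d_neq0 g1_neq_d k1 k2 k3 k4 {bd b1 b2 s1 s2} => [x1 x2] [y1 y2] [z1 z2].
rewrite !xpair_eqE /= => /nandP nx /nandP nxy *.
congr pair; lia.
Qed.

Lemma digit_adj_lift n d d' : (0 < N)%N -> digit_adj 2 d d' -> digit_adj n.+1 d d'.
Proof.
move=> N0; rewrite !digit_adjE => /[dup] /(cell_offset_box N0) bd.
move=> /cell_offsetS [g1 s1] /[dup] /(cell_offset_box N0) b1.
move=> /cell_offsetS [g2 s2] /(cell_offset_box N0) b2.
have [g [sg gg bg]] := digit_step_fixpoint bd b1 b2 s1 s2.
by apply/cell_offsetS; exists g => //; exact: cell_offset_fixed.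
Qed.

Lemma gsc_cells_connected_ge3 n : (0 < N)%N -> (3 <= n)%N ->
  rel_connected cell_adj (gsc_cells D 3) -> rel_connected cell_adj (gsc_cells D n).
Proof.
move=> N0 + c3; have c2 := digit_connected_of_cells c3.
elim: n => // n IH; rewrite leq_eqVlt => /predU1P[<- //|]; rewrite ltnS => n_ge3.
apply: gsc_cells_connectedS (IH n_ge3) (sub_rel_connected _ c2) => d d'.
have n_gt0 : (0 < n)%N by apply: leq_trans n_ge3.
by rewrite -(prednK n_gt0); exact: digit_adj_lift.
Qed.

End Cells.

Local Open Scope ring_scope.

Lemma connected_setX {U V : topologicalType} (A : set U) (B : set V) :
  connected A -> connected B -> connected (A `*` B).
Proof.
move=> cA cB.
have [->|/set0P[a0 Aa0]] := eqVneq A set0; first by rewrite set0X; exact: connected0.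
have [->|/set0P[b0 Bb0]] := eqVneq B set0; first by rewrite setX0; exact: connected0.
have -> : A `*` B = \bigcup_(a in A) (pair a @` B `|` pair^~ b0 @` A).
  apply/seteqP; split=> [[a b] [/= Aa Bb]|_ [a Aa [[b Bb <-]|[a' Aa' <-]]]] //.
  by exists a => //; left; exists b.
apply: bigcup_connected; first by exists (a0, b0) => a Aa; right; exists a0.
move=> a Aa; apply: connectedU.
- by exists (a, b0); split; [exists b0|exists a].
- apply: connected_continuous_connected cB _; apply: continuous_subspaceT => b.
  by apply: cvg_pair; [exact: cvg_cst|exact: cvg_id].
- apply: connected_continuous_connected cA _; apply: continuous_subspaceT => a'.
  by apply: cvg_pair; [exact: cvg_id|exact: cvg_cst].
Qed.

Lemma unit_squareE {R : realType} : unit_square = `[0, 1] `*` `[0, 1] :> set (R * R).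
Proof. by apply/seteqP; split=> x; rewrite /unit_square /= !in_itv. Qed.

Lemma unit_square_compact {R : realType} : compact (unit_square : set (R * R)).
Proof. by rewrite unit_squareE; apply: compact_setX; exact: segment_compact. Qed.

Lemma unit_square_connected {R : realType} : connected (unit_square : set (R * R)).
Proof. by rewrite unit_squareE; apply: connected_setX; exact: segment_connected. Qed.

Lemma connected_clopen_sub {T : topologicalType} (X Y B : set T) :
  (exists2 U, open U & B = X `&` U) -> (exists2 C, closed C & B = X `&` C) ->
  connected Y -> Y `<=` X -> Y `&` B !=set0 -> Y `<=` B.
Proof.
move=> [U oU BU] [C cC BC] cY YX YB.
suff YBY : Y `&` B = Y by rewrite -YBY => x [].
apply: cY => //.
- exists U => //; apply/seteqP; split=> x [Yx]; rewrite BU; first by case.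
  by move=> Ux; split=> //; split=> //; exact: YX.
- exists C => //; apply/seteqP; split=> x [Yx]; rewrite BC; first by case.
  by move=> Cx; split=> //; split=> //; exact: YX.
Qed.

Lemma compact_ball_subset {R : realType} {T : pseudoMetricType R} (B O : set T) :
  compact B -> open O -> B `<=` O ->
  exists2 e : R, 0 < e & forall x, B x -> ball x e `<=` O.
Proof.
move=> /compact_near_coveringP cB oO BO.
have : \forall n \near \oo, B `<=` [set x | ball x n.+1%:R^-1 `<=` O].
  apply: cB => x /BO Ox.
  have /nbhs_ballP[r r0 xrO] : nbhs x O by exact: open_nbhs_nbhs.
  have r2 : 0 < r / 2 by exact: divr_gt0.
  near=> y n.
  have xy : ball x (r / 2) y by near: y; exact: nbhsx_ballx.
  have n_small : n.+1%:R^-1 < r / 2 by near: n; exact: near_infty_natSinv_lt (PosNum r2).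
  move=> z yz; apply: xrO; rewrite (splitr r).
  exact: ball_triangle xy (le_ball (ltW n_small) yz).
move=> [m _ Bm]; exists m.+1%:R^-1 => //; exact: (Bm m (leqnn m)).
Unshelve. all: by end_near.
Qed.

Section Squares.
Variables (R : realType) (N : nat).
Hypothesis N_gt0 : (0 < N)%N.

Definition cell_map n (c : nat * nat) (x : R * R) : R * R :=
  ((x.1 + c.1%:R) / (N ^ n)%:R, (x.2 + c.2%:R) / (N ^ n)%:R).

Definition cell_square n c : set (R * R) := cell_map n c @` unit_square.

Lemma natr_expn_gt0 n : 0 < (N ^ n)%:R :> R.
Proof. by rewrite ltr0n expn_gt0 N_gt0. Qed.

Lemma cell_map0 : cell_map 0 (0, 0)%N = id.
Proof. by apply/funext => -[a b]; rewrite /cell_map /= expn0 !addr0 !divr1. Qed.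

Lemma gsc_map_cell_map n (d : 'I_N * 'I_N) u x :
  gsc_map d (cell_map n u x) = cell_map n.+1 (shift_cell (N ^ n) d u) x.
Proof.
have N0 : (N%:R : R) != 0 by rewrite pnatr_eq0 -lt0n.
have K0 := lt0r_neq0 (natr_expn_gt0 n).
rewrite /gsc_map /cell_map /shift_cell /= expnS !natrM !natrD !natrM.
by congr pair; field; apply/andP.
Qed.

Lemma cell_map_continuous n c : continuous (cell_map n c).
Proof.
move=> x; apply: (@cvg_pair _ _ _ _ (nbhs _) (nbhs _)); apply: cvgMl; apply: cvgD;
  (exact: cvg_cst) || exact: cvg_fst || exact: cvg_snd.
Qed.

Lemma cell_square_compact n c : compact (cell_square n c).
Proof.
apply: continuous_compact unit_square_compact.
exact: continuous_subspaceT (@cell_map_continuous n c).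
Qed.

Lemma cell_square_closed n c : closed (cell_square n c).
Proof. by apply: compact_closed; [exact: norm_hausdorff|exact: cell_square_compact]. Qed.

Lemma cell_square_connected n c : connected (cell_square n c).
Proof.
apply: connected_continuous_connected unit_square_connected _.
exact: continuous_subspaceT (@cell_map_continuous n c).
Qed.

Lemma cell_squareP n c x : cell_square n c x <->
  c.1%:R <= x.1 * (N ^ n)%:R <= c.1%:R + 1 /\ c.2%:R <= x.2 * (N ^ n)%:R <= c.2%:R + 1.
Proof.
have K0 := lt0r_neq0 (natr_expn_gt0 n).
split=> [[y [/andP[y1 y1'] /andP[y2 y2']] <-]|[/andP[x1 x1'] /andP[x2 x2']]].
  by rewrite /cell_map /= !divfK //; split; apply/andP; split; lra.
exists (x.1 * (N ^ n)%:R - c.1%:R, x.2 * (N ^ n)%:R - c.2%:R).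
  by split; apply/andP; split=> /=; lra.
by case: x {x1 x1' x2 x2'} => a b; rewrite /cell_map /= !subrK !mulfK.
Qed.

Lemma cell_square_meet_adj n c c' x :
  cell_square n c x -> cell_square n c' x -> cell_adj c c'.
Proof.
move=> /cell_squareP[/andP[x1 x1'] /andP[x2 x2']] /cell_squareP[/andP[y1 y1'] /andP[y2 y2']].
have natr_le (a b : nat) : (a%:R : R) <= b%:R + 1 -> (a <= b + 1)%N.
  by rewrite -(ler_nat R) natrD.
by split; [|split; [|split]]; apply: natr_le; lra.
Qed.

Lemma le_natrS (a b : nat) : (a <= b + 1)%N -> (a%:R : R) <= b%:R + 1.
Proof. by rewrite natr1 ler_nat addn1. Qed.

Lemma cell_adj_meet n c c' : cell_adj c c' -> cell_square n c `&` cell_square n c' !=set0.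
Proof.
move=> [a1 [a2 [a3 a4]]]; have K0 := lt0r_neq0 (natr_expn_gt0 n).
exists ((maxn c.1 c'.1)%:R / (N ^ n)%:R, (maxn c.2 c'.2)%:R / (N ^ n)%:R).
by split; apply/cell_squareP; rewrite /= !divfK //;
  split; apply/andP; split; rewrite ?ler_nat ?le_natrS //; lia.
Qed.

Lemma cell_square_ball n c c' x y (e : R) : 2 < (N ^ n)%:R * e ->
  cell_adj c c' -> cell_square n c x -> cell_square n c' y -> ball x e y.
Proof.
move=> Ke [/le_natrS a1 [/le_natrS a2 [/le_natrS a3 /le_natrS a4]]].
move=> /cell_squareP[/andP[x1 x1'] /andP[x2 x2']] /cell_squareP[/andP[y1 y1'] /andP[y2 y2']].
have K0 := natr_expn_gt0 n; rewrite -ball_normE /= prod_normE /= gt_max !ltr_norml.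
by apply/andP; split; apply/andP; split; nra.
Qed.

Definition tight_cell_cover n (A : set (nat * nat)) (S : set (R * R)) : Prop :=
  S `<=` \bigcup_(c in A) cell_square n c /\ forall c, A c -> S `&` cell_square n c !=set0.

Lemma cells_connected_of_cover n A S : finite_set A -> connected S ->
  tight_cell_cover n A S -> rel_connected cell_adj A.
Proof.
move=> finA cS [SA Smeets] T TA [t Tt] Tcl.
pose squares P := \bigcup_(c in P) cell_square n c.
have squares_closed P : P `<=` A -> closed (squares P).
  move=> PA; apply: closed_bigcup => [|c _]; last exact: cell_square_closed.
  exact: sub_finite_set finA.
have UV x : squares T x -> ~ squares (A `\` T) x.
  move=> [c Tc xc] [c' [Ac' nTc'] xc']; apply: nTc'.
  exact: Tcl Tc Ac' (cell_square_meet_adj xc xc').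
have SU : S `&` squares T = S.
  apply: cS.
  - by have [x [Sx xt]] := Smeets t (TA _ Tt); exists x; split=> //; exists t.
  - exists (~` squares (A `\` T)); first by rewrite openC; apply: squares_closed => c [].
    apply/seteqP; split=> x [Sx Ux]; split=> //; first exact: UV.
    have [c Ac xc] := SA _ Sx; have [Tc|nTc] := pselect (T c); first by exists c.
    by exfalso; apply: Ux; exists c.
  - by exists (squares T) => //; exact: squares_closed.
move=> c Ac; have [x [Sx xc]] := Smeets c Ac.
have [_ [c' Tc' xc']] : (S `&` squares T) x by rewrite SU.
exact: Tcl Tc' Ac (cell_square_meet_adj xc' xc).
Qed.

Lemma connected_cell_union n A :
  rel_connected cell_adj A -> connected (\bigcup_(c in A) cell_square n c).
Proof.
move=> cA B [b Bb] oB cB; have BQ : B `<=` \bigcup_(c in A) cell_square n c.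
  by case: oB => U _ ->; move=> x [].
have square_sub c : A c -> cell_square n c `&` B !=set0 -> cell_square n c `<=` B.
  move=> Ac; apply: connected_clopen_sub oB cB (@cell_square_connected n c) _.
  by move=> x xc; exists c.
have AT : A `<=` [set c | A c /\ cell_square n c `<=` B].
  apply: cA => [c []//||c c' [Ac cB'] Ac' cc'].
  - have [c Ac bc] := BQ _ Bb; exists c; split=> //.
    by apply: square_sub => //; exists b.
  - split=> //; apply: square_sub => //.
    by have [x [xc xc']] := cell_adj_meet n cc'; exists x; split=> //; exact: cB'.
by apply/seteqP; split=> // x [c /AT[_ cB'] xc]; exact: cB'.
Qed.

End Squares.

Section FineCovers.
Variables (R : realType) (N : nat).
Hypothesis N_gt1 : (1 < N)%N.
Let N_gt0 : (0 < N)%N := ltnW N_gt1.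

Lemma exists_pow_gt (x : R) : exists m, x < (N ^ m)%:R.
Proof.
exists (Num.truncn x).+1; apply: lt_le_trans (truncnS_gt x) _.
by rewrite ler_nat; apply: ltnW; exact: ltn_expl.
Qed.

Lemma cell_coord_unit (t B : R) :
  (forall n, exists y (c : nat), [/\ `|y| <= B, (c < N ^ n)%N & t = (y + c%:R) / (N ^ n)%:R]) ->
  0 <= t <= 1.
Proof.
move=> cells.
have bound0 s : (forall n, (N ^ n)%:R * s <= B) -> s <= 0.
  move=> sB; rewrite leNgt; apply/negP => s0.
  have [m Bm] := exists_pow_gt (B / s).
  by have := sB m; rewrite ltr_pdivrMr // in Bm; lra.
have scaled n : (N ^ n)%:R * - t <= B /\ (N ^ n)%:R * (t - 1) <= B.
  have [y [c [yB cK ->]]] := cells n; have K0 := lt0r_neq0 (natr_expn_gt0 R N_gt0 n).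
  have cK' : c%:R + 1 <= (N ^ n)%:R :> R by rewrite natr1 ler_nat.
  have c0 : 0 <= c%:R :> R by [].
  move: yB; rewrite ler_norml mulrN mulrBr mulr1 mulrC divfK // => /andP[yB1 yB2].
  split; lra.
apply/andP; split; [rewrite -oppr_le0|rewrite -subr_le0]; apply: bound0 => n.
  by have [] := scaled n.
by have [] := scaled n.
Qed.

Lemma connected_of_fine_covers (S : set (R * R)) (A : nat -> set (nat * nat)) :
  compact S ->
  (forall m, exists2 n, (m <= n)%N &
     tight_cell_cover N n (A n) S /\ rel_connected cell_adj (A n)) ->
  connected S.
Proof.
move=> cS fine B [b Bb] [U oU BU] [C cC BC].
have BS : B `<=` S by rewrite BU => x [].
have [e e0 BeU] : exists2 e, 0 < e & forall x, B x -> ball x e `<=` U.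
  apply: compact_ball_subset oU _; last by rewrite BU => x [].
  by rewrite BC; exact: compact_closedI.
have [m Km] := exists_pow_gt (2 / e); rewrite ltr_pdivrMr // in Km.
have [n mn [[SA Smeets] cAn]] := fine m.
have Kn : 2 < (N ^ n)%:R * e.
  by apply: lt_le_trans Km _; rewrite ler_pM2r // ler_nat leq_exp2l.
have SOB x : S x -> U x -> B x by move=> Sx Ux; rewrite BU.
have AT : A n `<=` [set c | A n c /\ cell_square N n c `&` B !=set0].
  apply: cAn => [c []//||c c' [_ [x [xc Bx]]] Ac' cc'].
  - by have [c Ac bc] := SA _ (BS _ Bb); exists c; split=> //; exists b.
  - split=> //; have [y [Sy yc']] := Smeets c' Ac'; exists y; split=> //.
    exact: SOB Sy (BeU _ Bx _ (cell_square_ball N_gt0 Kn cc' xc yc')).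
apply/seteqP; split=> // x Sx; have [c Ac xc] := SA _ Sx.
have [_ [z [zc Bz]]] := AT _ Ac.
apply: SOB Sx (BeU _ Bz _ (cell_square_ball N_gt0 Kn _ zc xc)).
by rewrite /cell_adj; lia.
Qed.

End FineCovers.

Section Hutchinson.
Variables (R : realType) (N : nat) (D : {set 'I_N * 'I_N}).
Hypothesis N_gt0 : (0 < N)%N.

Definition hutchinson (S : set (R * R)) : set (R * R) :=
  \bigcup_(i in [set i | i \in D]) (gsc_map i @` S).

Lemma iter_hutchinson n S :
  iter n hutchinson S = \bigcup_(c in gsc_cells D n) (cell_map N n c @` S).
Proof.
elim: n => [|n IH] /=; first by rewrite bigcup_set1 cell_map0 image_id.
rewrite IH; apply/seteqP.
split=> [_ [d dD [_ [c Ac [y Sy <-]] <-]]|_ [_ [d dD [c Ac ->]] [y Sy <-]]].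
  exists (shift_cell (N ^ n) d c); first by exists d => //; exists c.
  by exists y => //; rewrite gsc_map_cell_map.
exists d => //; exists (cell_map N n c y); first by exists c => //; exists y.
by rewrite gsc_map_cell_map.
Qed.

Lemma gsc_Q_cells n : gsc_Q (R:=R) D n = \bigcup_(c in gsc_cells D n) cell_square N n c.
Proof.
have -> : gsc_Q (R:=R) D n = iter n hutchinson unit_square by elim: n => //= n ->.
exact: iter_hutchinson.
Qed.

Lemma tight_cell_cover_gsc_Q n : tight_cell_cover N n (gsc_cells D n) (gsc_Q (R:=R) D n).
Proof.
rewrite gsc_Q_cells; split=> // c Ac.
have sq0 : cell_square N n c (cell_map N n c ((0, 0) : R * R)).
  by exists (0, 0); rewrite // /unit_square /= lexx ler01.
by exists (cell_map N n c (0, 0)); split=> //; exists c.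
Qed.

End Hutchinson.

Section Attractor.
Variables (R : realType) (N : nat) (D : {set 'I_N * 'I_N}) (F : set (R * R)).
Hypotheses (N_gt1 : (1 < N)%N) (gsc_F : gsc_attractor D F).
Let N_gt0 : (0 < N)%N := ltnW N_gt1.

Lemma attractor_iter n : F = iter n (hutchinson D) F.
Proof. by case: gsc_F => _ [_ FE]; elim: n => //= n <-. Qed.

Lemma attractor_sub_unit_square : F `<=` unit_square.
Proof.
have [_ [cF _]] := gsc_F; have [M [_ FM]] := compact_bounded cF.
have M_lt : M < `|M| + 1 by have := ler_norm M; lra.
have FB y : F y -> `|y.1| <= `|M| + 1 /\ `|y.2| <= `|M| + 1.
  by move=> /(FM _ M_lt); rewrite /= prod_normE ge_max => /andP.
move=> x Fx.
have cells n : exists c y, [/\ gsc_cells D n c, F y & x = cell_map N n c y].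
  move: Fx; rewrite {1}(attractor_iter n) (iter_hutchinson _ N_gt0).
  by move=> [c Ac [y Fy <-]]; exists c, y.
split; apply: (@cell_coord_unit R N N_gt1 _ (`|M| + 1)) => n;
  have [c [y [Ac Fy ->]]] := cells n; have [y1 y2] := FB _ Fy; have [c1 c2] := gsc_cells_lt Ac.
- by exists y.1, c.1.
- by exists y.2, c.2.
Qed.

Lemma tight_cell_cover_attractor n : tight_cell_cover N n (gsc_cells D n) F.
Proof.
have Fu := attractor_sub_unit_square; have [[y0 Fy0] _] := gsc_F.
split=> [x|c Ac].
  rewrite {1}(attractor_iter n) (iter_hutchinson _ N_gt0) => -[c Ac [y Fy <-]].
  by exists c => //; exists y => //; exact: Fu.
exists (cell_map N n c y0); split; last by exists y0 => //; exact: Fu.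
by rewrite (attractor_iter n) (iter_hutchinson _ N_gt0); exists c => //; exists y0.
Qed.

End Attractor.

Unset Implicit Arguments.

Theorem mainTheorem8 (R : realType) (N : nat) (D : {set 'I_N * 'I_N}) (F : set (R * R)) :
  (2 <= N)%N -> (1 < #|D|)%N -> (#|D| < N ^ 2)%N ->
  gsc_attractor D F ->
  (connected F <-> connected (gsc_Q (R:=R) D 3)).
Proof.
move=> N_gt1 _ _ gsc_F; have N_gt0 : (0 < N)%N := ltnW N_gt1.
have cells3_connected (S : set (R * R)) : connected S ->
    tight_cell_cover N 3 (gsc_cells D 3) S -> rel_connected cell_adj (gsc_cells D 3).
  by move=> cS; apply: (cells_connected_of_cover N_gt0 (gsc_cells_finite D 3) cS).
have F_cover n := tight_cell_cover_attractor N_gt1 gsc_F n.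
split=> [cF|cQ].
  rewrite (gsc_Q_cells _ _ N_gt0).
  exact: connected_cell_union N_gt0 _ _ (cells3_connected _ cF (F_cover 3)).
have cells_connected := cells3_connected _ cQ (tight_cell_cover_gsc_Q R D N_gt0 3).
apply: (@connected_of_fine_covers R N N_gt1 F (gsc_cells D) gsc_F.2.1) => m.
exists (m + 3)%N; first exact: leq_addr.
by split; [exact: F_cover|exact: gsc_cells_connected_ge3 N_gt0 (leq_addl _ _) cells_connected].
Qed.
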